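(* Let $n=2$ and suppose both agents are strategic and have complete and perfect information. For any categorial sequential allocation mechanism $f_\mathcal O$ (with any number $p$ of categories), there exists a profile $P$ such that for $j=1,2$, the rank (in $R_j$) of the bundle allocated to agent $j$ in the subgame-perfect Nash equilibrium is exactly $n^p+1-\prod_{i=1}^{p}k_{j,i}$.
   Context: Basic categorized domain: $n$ agents, $p$ categories $D_i=\{1,\ldots,n\}$ of indivisible items, bundles $\mathfrak D=D_1\times\cdots\times D_p$; each agent $j$ has a linear order $R_j$ over $\mathfrak D$; a profile is $(R_1,\ldots,R_n)$. The rank of a bundle in $R_j$ is its position (top $=1$, bottom $=n^p$). CSAM $f_\mathcal O$: given a linear order $\mathcal O$ over $\{1,\ldots,n\}\times\{1,\ldots,p\}$, in rounds $t=1,\ldots,np$, if the $t$-th element of $\mathcal O$ is $(j,i)$ then agent $j$ chooses an item $d_{j,i}$ from the items of $D_i$ not yet chosen; all choices are observed by all agents; agent $j$ finally receives $(d_{j,1},\ldots,d_{j,p})$. With strategic agents with complete and perfect information, this is an extensive-form game in which each agent's preference over outcomes is her linear order over her final bundle; its subgame-perfect Nash equilibrium is unique. $k_{j,i}$ denotes the number of items of $D_i$ still available right before agent $j$ chooses from $D_i$, i.e. $n$ minus the number of agents who choose from $D_i$ before $j$ in $\mathcal O$. *)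

From mathcomp Require Import all_boot all_order.
Set Implicit Arguments. Unset Strict Implicit. Unset Printing Implicit Defensive.

(* Basic categorized domain with n agents and p categories.
   Agents are 'I_n, categories are 'I_p, and the items of every category D_i
   are 'I_n (i.e. {1,...,n} shifted to {0,...,n-1}). *)

Definition bundle (n p : nat) := {ffun 'I_p -> 'I_n}.

(* A (weak-form) linear order over bundles: [R x y] means x is ranked at or
   above y in R. *)
Definition linear_order (T : finType) (R : rel T) : Prop :=
  [/\ reflexive R, antisymmetric R, transitive R & total R].

(* Rank of b in R: its position, top = 1, bottom = #|T|. *)
Definition rank (T : finType) (R : rel T) (b : T) : nat := #|[pred y | R y b]|.

(* A CSAM order O: a linear order over agents x categories, given as the
   sequence listing all pairs (j,i) exactly once. *)
Definition valid_order (n p : nat) (O : seq ('I_n * 'I_p)) : Prop :=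
  uniq O /\ forall x : 'I_n * 'I_p, x \in O.

(* k_{j,i}: number of items of D_i still available right before agent j
   chooses from D_i. *)
Definition kji (n p : nat) (O : seq ('I_n * 'I_p)) (j : 'I_n) (i : 'I_p) : nat :=
  n - count (fun x : 'I_n * 'I_p => x.2 == i) (take (index (j, i) O) O).

(* A history: the sequence of choices (agent, category, item) made so far. *)
Definition history (n p : nat) := seq ('I_n * 'I_p * 'I_n).

Definition avail (n p : nat) (h : history n p) (i : 'I_p) : seq 'I_n :=
  [seq d <- enum 'I_n | ~~ has (fun e : 'I_n * 'I_p * 'I_n => (e.1.2 == i) && (e.2 == d)) h].

(* The bundle agent j holds at the end of a (complete) history h; the
   default value (j itself, seen as an item) is irrelevant for complete plays. *)
Definition bundle_of (n p : nat) (h : history n p) (j : 'I_n) : bundle n p :=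
  [ffun i => odflt j
     (ohead [seq e.2 | e <- h & (e.1.1 == j) && (e.1.2 == i)])].

(* Among candidate final histories, the one whose bundle for agent j is
   best according to R (strict preferences make it unique). *)
Definition best (n p : nat) (R : rel (bundle n p)) (j : 'I_n)
    (dflt : history n p) (cands : seq (history n p)) : history n p :=
  foldl (fun b c => if R (bundle_of c j) (bundle_of b j) then c else b)
        (head dflt cands) cands.

(* Backward induction on the extensive-form game of the CSAM with remaining
   moves [moves] from history [h]: returns the final history of the
   subgame-perfect equilibrium play. *)
Fixpoint bi (n p : nat) (P : 'I_n -> rel (bundle n p))
    (moves : seq ('I_n * 'I_p)) (h : history n p) : history n p :=
  match moves with
  | [::] => h
  | (j, i) :: ms =>
      best (P j) j h [seq bi P ms (rcons h (j, i, d)) | d <- avail h i]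
  end.

Definition spne_history (n p : nat) (P : 'I_n -> rel (bundle n p))
    (O : seq ('I_n * 'I_p)) : history n p := bi P O [::].

(** Let [F_j] be the set of bundles holding item [1] in every category where
    agent [j] chooses second, so that [#|F_j| = prod_i k_{j,i}]. Agent [j]
    ranks every bundle outside [F_j] above [F_j] and, other things equal,
    prefers item [0] in each category where she chooses first. Under this
    profile every subgame is played greedily (each agent takes the lowest
    available item): the second chooser of a category has a single option,
    and the first chooser's pick changes only that coordinate of her bundle,
    where she prefers [0]. Hence agent [j] ends with the top bundle of [F_j],
    which is preceded exactly by the bundles outside [F_j]. *)

From mathcomp Require Import all_boot all_order.
Set Implicit Arguments. Unset Strict Implicit. Unset Printing Implicit Defensive.

Lemma linear_order_key (T : finType) (f : T -> nat) :
  injective f -> linear_order (fun y z => f z <= f y).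
Proof.
move=> f_inj; split=> [y | y z | y x z | y z] /=.
- exact: leqnn.
- by move=> le_yz; apply: f_inj; apply/eqP; rewrite eqn_leq andbC.
- by move=> le_xy le_zx; apply: leq_trans le_zx le_xy.
- exact: leq_total.
Qed.

Section History.
Variables (n p : nat).
Implicit Types (h : history n p) (i : 'I_p) (j d : 'I_n).

Definition taken h i : seq 'I_n := [seq e.2 | e <- h & e.1.2 == i].

Lemma size_taken h i :
  size (taken h i) = count (fun x : 'I_n * 'I_p => x.2 == i) (map fst h).
Proof. by rewrite size_map size_filter count_map. Qed.

Lemma avail_taken h i : avail h i = [seq d <- enum 'I_n | d \notin taken h i].
Proof.
apply: eq_filter => d; congr negb; rewrite /taken.
elim: h => //= e h ->; case: (e.1.2 == i) => //=.
by rewrite in_cons eq_sym.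
Qed.

Definition erase_cat i h := [seq e <- h | e.1.2 != i].

Lemma taken_erase_cat i i' h : i' != i -> taken (erase_cat i h) i' = taken h i'.
Proof.
move=> ne_i; rewrite /taken /erase_cat -filter_predI; congr map.
by apply: eq_filter => e /=; case: eqP => // ->; rewrite ne_i.
Qed.

Lemma bundle_of_erase_cat i i' h j :
  i' != i -> bundle_of (erase_cat i h) j i' = bundle_of h j i'.
Proof.
move=> ne_i; rewrite !ffunE /erase_cat -filter_predI; do 3 f_equal.
by apply: eq_filter => e /=; apply/andb_idr => /andP [_ /eqP ->].
Qed.

Lemma bundle_of_rcons_cat h r j i d :
  (j, i) \notin map fst h -> bundle_of (rcons h (j, i, d) ++ r) j i = d.
Proof.
move=> fresh; rewrite ffunE -cats1 -catA filter_cat /= !eqxx.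
suff -> : [seq e <- h | (e.1.1 == j) && (e.1.2 == i)] = [::] by [].
apply/eqP; rewrite -size_eq0 size_filter -leqn0 leqNgt -has_count.
apply: contra fresh => /hasP [[[a b] c] e_h /andP [/eqP /= <- /eqP /= <-]].
exact: (map_f fst e_h).
Qed.

Lemma best_seq1 (R : rel (bundle n p)) j dflt c : best R j dflt [:: c] = c.
Proof. by rewrite /best /= if_same. Qed.

Lemma best_seq2 (R : rel (bundle n p)) j dflt c0 c1 :
  ~~ R (bundle_of c1 j) (bundle_of c0 j) -> best R j dflt [:: c0; c1] = c0.
Proof. by rewrite /best /= if_same => /negbTE ->. Qed.

(* The default [j] of [head] is never used on a play, where [avail] is nonempty. *)
Fixpoint greedy (ms : seq ('I_n * 'I_p)) h : history n p :=
  if ms is (j, i) :: ms' then greedy ms' (rcons h (j, i, head j (avail h i)))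
  else h.

Lemma greedy_prefix ms h : exists r, greedy ms h = h ++ r.
Proof.
elim: ms h => [|[j i] ms IH] h /=; first by exists [::]; rewrite cats0.
by have [r ->] := IH (rcons h (j, i, head j (avail h i))); rewrite cat_rcons; eexists.
Qed.

Lemma erase_cat_greedy i ms h h' :
  erase_cat i h = erase_cat i h' ->
  erase_cat i (greedy ms h) = erase_cat i (greedy ms h').
Proof.
elim: ms h h' => [|[j i'] ms IH] h h' //= eq_hh'; apply: IH.
rewrite /erase_cat -!cats1 !filter_cat -!/(erase_cat i _) eq_hh' /=.
have [-> //|ne_i] := eqVneq i' i.
by rewrite !avail_taken -(taken_erase_cat h ne_i) -(taken_erase_cat h' ne_i) eq_hh'.
Qed.

Lemma bundle_of_greedy_rcons ms h j i d d' j' i' : i' != i ->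
  bundle_of (greedy ms (rcons h (j, i, d))) j' i'
  = bundle_of (greedy ms (rcons h (j, i, d'))) j' i'.
Proof.
move=> ne_i; rewrite -(bundle_of_erase_cat _ _ ne_i).
rewrite (@erase_cat_greedy i ms _ (rcons h (j, i, d'))) ?bundle_of_erase_cat //.
by rewrite /erase_cat -!cats1 !filter_cat /= eqxx.
Qed.

Lemma bundle_of_greedy_rcons_self ms h j i d :
  (j, i) \notin map fst h -> bundle_of (greedy ms (rcons h (j, i, d))) j i = d.
Proof.
by have [r ->] := greedy_prefix ms (rcons h (j, i, d)); apply: bundle_of_rcons_cat.
Qed.

Lemma kji_cat (s ms : seq ('I_n * 'I_p)) j i :
  uniq (s ++ (j, i) :: ms) ->
  kji (s ++ (j, i) :: ms) j i = n - count (fun x => x.2 == i) s.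
Proof.
rewrite cat_uniq /= => /and4P [_ /norP [fresh _] _ _].
by rewrite /kji index_cat (negbTE fresh) /= eqxx addn0 take_size_cat.
Qed.

Lemma count_cat_le (O : seq ('I_n * 'I_p)) i :
  uniq O -> count (fun x => x.2 == i) O <= n.
Proof.
move=> uO; rewrite -size_filter.
apply: (@leq_trans (size [seq (a, i) | a <- enum 'I_n])); last first.
  by rewrite size_map size_enum_ord.
apply: uniq_leq_size; first exact: filter_uniq.
by move=> [a b]; rewrite mem_filter /= => /andP [/eqP -> _]; rewrite map_f ?mem_enum.
Qed.

End History.

Lemma ord2P (a : 'I_2) : a = ord0 \/ a = ord_max.
Proof. by case: a => [[|[|m]] lt_a]; [left; apply: val_inj|right; apply: val_inj|]. Qed.

Lemma enum_ord2 : enum 'I_2 = [:: ord0; ord_max].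
Proof. by apply: (inj_map val_inj); rewrite val_enum_ord. Qed.

Lemma avail_taken_nil p (h : history 2 p) i :
  taken h i = [::] -> avail h i = [:: ord0; ord_max].
Proof. by move=> taken_h; rewrite avail_taken taken_h enum_ord2. Qed.

Lemma avail_taken1 p (h : history 2 p) i d :
  taken h i = [:: d] -> avail h i = [:: if d == ord0 then ord_max else ord0].
Proof.
by move=> taken_h; rewrite avail_taken taken_h enum_ord2; case: (ord2P d) => ->.
Qed.

Section Profile.
Variables (p : nat) (O : seq ('I_2 * 'I_p)).
Implicit Types (j : 'I_2) (i : 'I_p) (y z : bundle 2 p).

Definition first_mover j i := kji O j i == 2.

Definition forced j y := [forall i, first_mover j i || (y i == ord_max)].

Definition best_forced j : bundle 2 p :=
  [ffun i => if first_mover j i then ord0 else ord_max].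

(* [p.+1] exceeds the sum, so leaving [forced j] outweighs any change inside it. *)
Definition score j y :=
  p.+1 * ~~ forced j y + \sum_(i < p) (first_mover j i && (y i == ord0)).

Definition key j y := score j y * #|{: bundle 2 p}| + enum_rank y.

Definition profile j : rel (bundle 2 p) := fun y z => key j z <= key j y.

Lemma key_inj j : injective (key j).
Proof.
move=> y z /(congr1 (modn^~ #|{: bundle 2 p}|)).
by rewrite !modnMDl !modn_small ?ltn_ord // => /val_inj /enum_rank_inj.
Qed.

Lemma linear_order_profile j : linear_order (profile j).
Proof. exact/linear_order_key/key_inj. Qed.

Lemma key_lt j y z : score j y < score j z -> key j y < key j z.
Proof.
move=> lt_yz; rewrite /key; apply: (@leq_trans ((score j y).+1 * #|{: bundle 2 p}|)).
  by rewrite mulSn addnC ltn_add2r ltn_ord.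
by apply: leq_trans (leq_addr _ _); rewrite leq_mul2r lt_yz orbT.
Qed.

Lemma score_flip j i y z : first_mover j i -> y i = ord0 -> z i = ord_max ->
  (forall i', i' != i -> y i' = z i') -> score j z < score j y.
Proof.
move=> first_i y_i z_i eq_yz; rewrite /score.
have -> : forced j y = forced j z.
  by apply: eq_forallb => i'; have [->|/eq_yz ->] := eqVneq i' i; rewrite ?first_i.
rewrite ltn_add2l [X in _ < X](bigD1 i) // [X in X < _](bigD1 i) //= first_i y_i z_i.
by rewrite add0n add1n ltnS; apply/eq_leq/eq_bigr => i' /eq_yz ->.
Qed.

Lemma forced_best_forced j : forced j (best_forced j).
Proof. by apply/forallP => i; rewrite ffunE; case: first_mover. Qed.

Lemma key_ge_best_forced j y :
  (key j (best_forced j) <= key j y) = (y == best_forced j) || ~~ forced j y.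
Proof.
have [-> | ne_y] := eqVneq y (best_forced j); first exact: leqnn.
have score_b : score j (best_forced j) = \sum_(i < p) first_mover j i.
  rewrite /score forced_best_forced muln0 add0n.
  by apply: eq_bigr => i _; rewrite ffunE; case: first_mover.
have sum_le : \sum_(i < p) first_mover j i <= p.
  by rewrite -[p in _ <= p]card_ord -sum1_card leq_sum // => i _; apply: leq_b1.
case forced_y: (forced j y) => /=.
  apply/negbTE; rewrite -ltnNge key_lt // score_b /score forced_y muln0 add0n.
  have [i ne_i] : exists i, y i != best_forced j i.
    apply/existsP; apply: contraR ne_y => /existsPn eq_y.
    by apply/eqP/ffunP => i; apply/eqP/negPn.
  have first_i : first_mover j i.
    move: ne_i (forallP forced_y i); rewrite ffunE.
    by case: first_mover => //= /negbTE ->.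
  rewrite (bigD1 i) // [X in _ < X](bigD1 i) //= first_i.
  move: ne_i; rewrite ffunE first_i => /negbTE -> /=; rewrite add0n add1n ltnS.
  by apply: leq_sum => i' _; case: first_mover; rewrite ?leq_b1.
apply/ltnW/key_lt; rewrite score_b /score forced_y muln1.
by apply: leq_trans (leq_addr _ _); rewrite ltnS.
Qed.

Hypotheses (uO : uniq O) (allO : forall x, x \in O).

Lemma count_prefix_le1 s j i ms :
  s ++ (j, i) :: ms = O -> count (fun x => x.2 == i) s <= 1.
Proof.
move=> eqO; have := count_cat_le i uO; rewrite -eqO count_cat /= eqxx.
by rewrite add1n addnS ltnS; apply: leq_trans; apply: leq_addr.
Qed.

Lemma first_mover_prefix s j i ms :
  s ++ (j, i) :: ms = O -> first_mover j i = (count (fun x => x.2 == i) s == 0).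
Proof.
move=> eqO; rewrite /first_mover -eqO kji_cat ?eqO //.
by case: (count _ s) (count_prefix_le1 eqO) => [|[]].
Qed.

Lemma kji_first_mover j i : kji O j i = (first_mover j i).+1.
Proof.
have [s [ms eqO]] : exists s ms, s ++ (j, i) :: ms = O.
  by case/splitPr: (allO (j, i)) => s ms; exists s, ms.
rewrite (first_mover_prefix eqO) -eqO kji_cat ?eqO //.
by case: (count _ s) (count_prefix_le1 eqO) => [|[]].
Qed.

Lemma card_forced j : #|forced j| = \prod_(i < p) kji O j i.
Proof.
pose F i : pred 'I_2 := [pred d | first_mover j i || (d == ord_max)].
have := card_family F; rewrite foldrE big_map big_enum /=.
rewrite (eq_card (B := forced j)) => [->|y]; last by rewrite !inE.
apply: eq_bigr => i _; rewrite kji_first_mover /F.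
case: first_mover; last exact: card1.
by rewrite (eq_card (B := predT)) ?card_ord.
Qed.

Lemma bi_profile_greedy ms h : map fst h ++ ms = O -> bi profile ms h = greedy ms h.
Proof.
elim: ms h => [|[j i] ms IH] h eqO //=.
have IHd d : bi profile ms (rcons h (j, i, d)) = greedy ms (rcons h (j, i, d)).
  by apply: IH; rewrite map_rcons cat_rcons.
have fresh : (j, i) \notin map fst h.
  by move: uO; rewrite -eqO cat_uniq /= => /and4P [_ /norP []].
have := count_prefix_le1 eqO; rewrite -size_taken.
case taken_h: (taken h i) => [|d [|//]] _; last first.
  by rewrite (avail_taken1 taken_h) /= best_seq1 IHd.
rewrite (avail_taken_nil taken_h) /= !IHd best_seq2 //.
have first_i : first_mover j i by rewrite (first_mover_prefix eqO) -size_taken taken_h.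
rewrite /profile -ltnNge key_lt // (score_flip first_i) ?bundle_of_greedy_rcons_self //.
by move=> i' ne_i; apply: bundle_of_greedy_rcons.
Qed.

Lemma greedy_spne_path ms h : map fst h ++ ms = O ->
  h = [seq (x, best_forced x.1 x.2) | x <- map fst h] ->
  greedy ms h = [seq (x, best_forced x.1 x.2) | x <- O].
Proof.
elim: ms h => [|[j i] ms IH] h eqO eq_h /=; first by rewrite eq_h -eqO cats0.
suff -> : head j (avail h i) = best_forced j i.
  by apply: IH; rewrite !map_rcons ?cat_rcons // -eq_h.
have taken_h : taken h i = [seq best_forced x.1 x.2 | x <- map fst h & x.2 == i].
  by rewrite {1}eq_h /taken filter_map -map_comp.
have := count_prefix_le1 eqO; rewrite ffunE (first_mover_prefix eqO) -size_filter.
case prev: [seq x <- map fst h | x.2 == i] taken_h => [|[a b] [|//]] taken_h _.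
  by rewrite (avail_taken_nil taken_h).
have : (a, b) \in [seq x <- map fst h | x.2 == i] by rewrite prev mem_head.
rewrite mem_filter => /andP [/eqP /= b_i y_h].
move: y_h prev taken_h; rewrite {}b_i => y_h.
case/splitPr: y_h eqO => s1 s2 eqO prev.
have eqO' : s1 ++ (a, i) :: (s2 ++ (j, i) :: ms) = O by rewrite -eqO -catA.
have : count (fun x => x.2 == i) (s1 ++ (a, i) :: s2) = 1.
  by rewrite -size_filter prev.
rewrite count_cat /= eqxx addnCA add1n => -[/eqP].
rewrite addn_eq0 => /andP [/eqP count_s1 _].
by rewrite ffunE (first_mover_prefix eqO') count_s1 /= => /avail_taken1 ->.
Qed.

Lemma spne_history_profile :
  spne_history profile O = [seq (x, best_forced x.1 x.2) | x <- O].
Proof.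
by rewrite /spne_history (@bi_profile_greedy _ [::]) // (@greedy_spne_path _ [::]).
Qed.

Lemma bundle_of_spne_path j :
  bundle_of [seq (x, best_forced x.1 x.2) | x <- O] j = best_forced j.
Proof.
apply/ffunP => i; rewrite ffunE filter_map.
rewrite (@eq_filter _ _ (pred1 (j, i))) => [|[a b]]; last by rewrite /= xpair_eqE.
by rewrite filter_pred1_uniq.
Qed.

Lemma rank_best_forced j :
  rank (profile j) (best_forced j) = 2 ^ p + 1 - \prod_(i < p) kji O j i.
Proof.
rewrite /rank (eq_card (B := [predU1 best_forced j & predC (forced j)])); last first.
  by move=> y; rewrite !inE /= -key_ge_best_forced.
rewrite cardU1 inE negbK forced_best_forced.
have := cardC (forced j); rewrite card_ffun !card_ord card_forced => <-.
by rewrite -addnA addKn addn1.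
Qed.

End Profile.

Theorem proposition7 (p : nat) (O : seq ('I_2 * 'I_p)) :
  valid_order O ->
  exists P : 'I_2 -> rel (bundle 2 p),
    (forall j, linear_order (P j)) /\
    (forall j : 'I_2,
       rank (P j) (bundle_of (spne_history P O) j)
       = 2 ^ p + 1 - \prod_(i < p) kji O j i).
Proof.
move=> [uO allO]; exists (profile O); split=> j; first exact: linear_order_profile.
by rewrite spne_history_profile // bundle_of_spne_path // rank_best_forced.
Qed.
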